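(* If $v/u=q^{-r}$ for some nonnegative integer $r$, then \[ {}_3\phi_2\left(\begin{array}{c}y/x,\ q/abt,\ q/avt\\ yq/a,\ q/aut\end{array};q,\frac{xbvt}{u}\right)=\frac{(ybt,xq/a;q)_\infty}{(xbt,yq/a;q)_\infty}\,{}_3\phi_2\left(\begin{array}{c}y/x,\ v/u,\ q/abt\\ q/xbt,\ q/aut\end{array};q,q\right). \]
   Context: $q$ is a fixed complex number with $0<|q|<1$. $(a;q)_\infty=\prod_{k\ge0}(1-aq^k)$, $(a;q)_n=(a;q)_\infty/(aq^n;q)_\infty$, $(a_1,\dots,a_m;q)_n=\prod_i(a_i;q)_n$. ${}_r\phi_s\left(\begin{array}{c}a_1,\dots,a_r\\ b_1,\dots,b_s\end{array};q,x\right)=\sum_{n\ge0}\frac{(a_1,\dots,a_r;q)_n}{(q,b_1,\dots,b_s;q)_n}\big[(-1)^nq^{\binom n2}\big]^{1+s-r}x^n$. *)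

From Stdlib Require Import Reals.
From Coquelicot Require Import Coquelicot.
Open Scope C_scope.

Fixpoint qpoch (a q : C) (n : nat) : C :=
  match n with
  | O => 1
  | S m => qpoch a q m * (1 - a * pow_n q m)
  end.

(* (a;q)_oo : limit of the partial products (converges for |q|<1) *)
Definition qpoch_inf (a q : C) : C :=
  @lim C_CompleteNormedModule (filtermap (qpoch a q) eventually).

(* general term of 3phi2 (here 1+s-r = 0, so no extra (-1)^n q^(n choose 2) factor) *)
Definition phi32_term (a1 a2 a3 b1 b2 q z : C) (n : nat) : C :=
  qpoch a1 q n * qpoch a2 q n * qpoch a3 q n
  / (qpoch q q n * qpoch b1 q n * qpoch b2 q n) * pow_n z n.

Definition phi32 (a1 a2 a3 b1 b2 q z : C) : C :=
  @lim C_CompleteNormedModule (filtermap (@sum_n C_AbelianMonoid (phi32_term a1 a2 a3 b1 b2 q z)) eventually).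

(* Put A = y/x, B = q/(abt), z0 = xbt and D = q/(aut), so that v/u = q^-r and the left side is
   3phi2(A, B, D q^r; A B z0, D; q, z0 q^-r).  Its n-th term is the q-Gauss term
   (A, B; q)_n / (q, A B z0; q)_n z0^n times q^(-rn) (D q^n; q)_r / (D; q)_r, which is a polynomial
   of degree r in w = q^-n.  Expand this polynomial in the Newton basis prod_(j<k) (w - q^-j) (a
   form of the q-Chu-Vandermonde sum) and sum over n: the k-th Newton component becomes the
   shifted q-Gauss series 2phi1(A q^k, B q^k; A B z0 q^k; q, z0 q^-k), which the q-Gauss sum
   evaluates in closed form, and the r + 1 resulting products are the terms of the terminating
   3phi2 on the right.  The q-Gauss sum F(z) itself follows from the contiguous relation
   (1 - z)(1 - A B z) F(z) = (1 - A z)(1 - B z) F(z q), iterated N times, and F(z q^N) -> 1. *)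

From Stdlib Require Import Reals Lra Lia.
From Coquelicot Require Import Coquelicot.
Open Scope C_scope.

(** * Limits and series in [C] *)

Lemma Cmult_neq_0_inv (x y : C) : x * y <> 0 -> x <> 0 /\ y <> 0.
Proof. intros H; split; intros E; apply H; rewrite E; ring. Qed.

Lemma Cmod_1_minus_ge (w : C) : (1 - Cmod w <= Cmod (1 - w))%R.
Proof.
  assert (H := Cmod_triangle (1 - w) w). replace (1 - w + w) with (RtoC 1) in H by ring.
  rewrite Cmod_1 in H. lra.
Qed.

Lemma Cmod_1_minus_le (w : C) : (Cmod (1 - w) <= 1 + Cmod w)%R.
Proof. assert (H := Cmod_triangle 1 (- w)). now rewrite Cmod_1, Cmod_opp in H. Qed.

Lemma pow_le_one (x : R) (n : nat) : (0 <= x <= 1)%R -> (x ^ n <= 1)%R.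
Proof. intros Hx. rewrite <- (pow1 n). now apply pow_incr. Qed.

Lemma Cmod_bounded_below_finite (f : nat -> C) (K : nat) :
  (forall n, f n <> 0) -> exists m, (0 < m)%R /\ forall n, (n < K)%nat -> (m <= Cmod (f n))%R.
Proof.
  intros Hf. induction K as [|K [m [Hm HK]]]; [exists 1%R; split; [lra | lia]|].
  exists (Rmin m (Cmod (f K))). split; [apply Rmin_pos; [exact Hm | now apply Cmod_gt_0]|].
  intros n Hn. destruct (Nat.eq_dec n K) as [->|Hne]; [apply Rmin_r|].
  eapply Rle_trans; [apply Rmin_l | apply HK; lia].
Qed.

Lemma lim_eventually_C (u : nat -> C) (l : C) :
  filterlim u eventually (locally l) ->
  @lim C_CompleteNormedModule (filtermap u eventually) = l.
Proof.
  intros Hu.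
  assert (HF : ProperFilter (filtermap u eventually)).
  { apply filtermap_proper_filter, eventually_filter. }
  assert (Hc : cauchy (filtermap u eventually)).
  { intros eps. exists l. apply Hu, locally_ball. }
  apply eq_close. intros eps.
  pose (e2 := mkposreal (eps / 2) (is_pos_div_2 eps)).
  assert (Hlim := @complete_cauchy C_CompleteNormedModule _ HF Hc e2).
  assert (Hl : filtermap u eventually (ball l e2)) by apply Hu, locally_ball.
  destruct (filter_and _ _ Hlim Hl) as [N HN].
  destruct (HN N (Nat.le_refl N)) as [H1 H2].
  replace (pos eps) with (e2 + e2)%R by (simpl; field).
  eapply ball_triangle; [exact H1 | apply ball_sym, H2].
Qed.

Section Limits.
Context {T : Type} {F : (T -> Prop) -> Prop} {FF : Filter F}.

(* [locally] on [C] comes from the product uniform structure, while [filterlim_mult] is stated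
   for the [Cmod]-balls of [C_AbsRing]; [locally_C] relates the two. *)
Lemma filterlim_Cmult (f g : T -> C) (l m : C) :
  filterlim f F (locally l) -> filterlim g F (locally m) ->
  filterlim (fun x => f x * g x) F (locally (l * m)).
Proof.
  intros Hf Hg.
  apply (filterlim_filter_le_2 (G := @locally (AbsRing_UniformSpace C_AbsRing) (l * m))).
  { intros P. apply locally_C. }
  apply (filterlim_comp_2 (G := @locally (AbsRing_UniformSpace C_AbsRing) l)
           (H := @locally (AbsRing_UniformSpace C_AbsRing) m) f g Cmult).
  - eapply filterlim_filter_le_2; [intros P; apply locally_C | exact Hf].
  - eapply filterlim_filter_le_2; [intros P; apply locally_C | exact Hg].
  - exact (@filterlim_mult C_AbsRing l m).
Qed.

Lemma filterlim_Cplus (f g : T -> C) (l m : C) :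
  filterlim f F (locally l) -> filterlim g F (locally m) ->
  filterlim (fun x => f x + g x) F (locally (l + m)).
Proof.
  intros Hf Hg.
  exact (filterlim_comp_2 f g Cplus Hf Hg (@filterlim_plus C_AbsRing C_NormedModule l m)).
Qed.

End Limits.

Lemma filterlim_C_unique (u : nat -> C) (l m : C) :
  filterlim u eventually (locally l) -> filterlim u eventually (locally m) -> l = m.
Proof.
  apply (@filterlim_locally_unique _ C_AbsRing C_NormedModule), Proper_StrongProper.
  apply eventually_filter.
Qed.

Lemma is_lim_seq_Cmod (u : nat -> C) (l : C) :
  filterlim u eventually (locally l) -> is_lim_seq (fun n => Cmod (u n)) (Cmod l).
Proof.
  intros Hu. apply (filterlim_comp _ _ _ u Cmod _ (locally l)); [exact Hu|].
  intros P HP. exact (@filterlim_norm C_AbsRing C_NormedModule l P HP).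
Qed.

Lemma Cmod_lim_le (u : nat -> C) (l : C) (c : R) :
  filterlim u eventually (locally l) -> (forall n, Cmod (u n) <= c)%R -> (Cmod l <= c)%R.
Proof.
  intros Hu Hc. exact (is_lim_seq_le _ _ _ _ Hc (is_lim_seq_Cmod u l Hu) (is_lim_seq_const c)).
Qed.

Lemma Cmod_lim_ge (u : nat -> C) (l : C) (c : R) :
  filterlim u eventually (locally l) -> (forall n, c <= Cmod (u n))%R -> (c <= Cmod l)%R.
Proof.
  intros Hu Hc. exact (is_lim_seq_le _ _ _ _ Hc (is_lim_seq_const c) (is_lim_seq_Cmod u l Hu)).
Qed.

Lemma filterlim_C_of_Cmod_le (u : nat -> C) (l : C) (b : nat -> R) :
  eventually (fun n => Cmod (u n - l) <= b n)%R -> is_lim_seq b 0%R ->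
  filterlim u eventually (locally l).
Proof.
  intros Hb Hb0.
  assert (Hn : is_lim_seq (fun n => Cmod (u n - l)) 0%R).
  { apply (is_lim_seq_le_le_loc (fun _ => 0%R) _ b); [| apply is_lim_seq_const | exact Hb0].
    destruct Hb as [N HN]. exists N. intros n Hn. split; [apply Cmod_ge_0 | now apply HN]. }
  assert (Hd : filterlim (fun n => u n - l) eventually (locally (RtoC 0)))
    by exact (filterlim_norm_zero (K := C_AbsRing) (V := C_NormedModule) _ Hn).
  assert (Hs := filterlim_Cplus _ _ _ _ Hd (filterlim_const l)).
  rewrite Cplus_0_l in Hs.
  eapply filterlim_ext; [| exact Hs]. intros n. cbv beta. ring.
Qed.

(* Coquelicot's [sum_n] lemmas restated at type [C], so that [ring] and [field] apply after
   rewriting with them. *)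
Lemma sum_n_C_S (f : nat -> C) n : @eq C (sum_n f (S n)) (sum_n f n + f (S n)).
Proof. exact (@sum_Sn C_AbelianMonoid f n). Qed.

Lemma sum_n_C_scal (c : C) (f : nat -> C) n : @eq C (c * sum_n f n) (sum_n (fun k => c * f k) n).
Proof. symmetry. exact (@sum_n_mult_l C_Ring c f n). Qed.

Lemma sum_n_C_plus (f g : nat -> C) n :
  @eq C (sum_n (fun k => f k + g k) n) (sum_n f n + sum_n g n).
Proof. exact (@sum_n_plus C_AbelianMonoid f g n). Qed.

Lemma sum_n_C_ext (f g : nat -> C) n : (forall k, f k = g k) -> @eq C (sum_n f n) (sum_n g n).
Proof. intros Hfg. now apply sum_n_ext. Qed.

Lemma sum_n_C_ext_loc (f g : nat -> C) n :
  (forall k, (k <= n)%nat -> f k = g k) -> @eq C (sum_n f n) (sum_n g n).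
Proof. intros Hfg. now apply sum_n_ext_loc. Qed.

Lemma sum_n_C_first (f : nat -> C) n : @eq C (sum_n f (S n)) (f O + sum_n (fun k => f (S k)) n).
Proof.
  induction n as [|n IH].
  - rewrite sum_n_C_S, !sum_O. reflexivity.
  - rewrite sum_n_C_S, IH, sum_n_C_S. symmetry. apply Cplus_assoc.
Qed.

Lemma lim_sum_n_is_series (f : nat -> C) (l : C) :
  is_series f l -> @lim C_CompleteNormedModule (filtermap (@sum_n C_AbelianMonoid f) eventually) = l.
Proof. exact (lim_eventually_C (sum_n f) l). Qed.

Lemma is_series_Cmult_l (c : C) (f : nat -> C) (l : C) :
  is_series f l -> is_series (fun n => c * f n) (c * l).
Proof. exact (@is_series_scal C_AbsRing C_NormedModule c f l). Qed.

Lemma is_series_Cplus (f g : nat -> C) (l m : C) :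
  is_series f l -> is_series g m -> is_series (fun n => f n + g n) (l + m).
Proof. exact (@is_series_plus C_AbsRing C_NormedModule f g l m). Qed.

Lemma is_series_sum_n (F : nat -> nat -> C) (L : nat -> C) (K : nat) :
  (forall k, (k <= K)%nat -> is_series (F k) (L k)) ->
  is_series (fun n => sum_n (fun k => F k n) K) (sum_n L K).
Proof.
  induction K as [|K IH]; intros HF.
  - rewrite (sum_O L).
    eapply is_series_ext; [intros n; symmetry; apply (sum_O (fun k => F k n)) | apply HF; lia].
  - rewrite sum_n_C_S.
    eapply is_series_ext; [intros n; symmetry; apply sum_n_C_S |].
    apply is_series_Cplus; [apply IH; intros; apply HF; lia | apply HF; lia].
Qed.

Lemma is_series_terminating (f : nat -> C) (r : nat) :
  (forall n, (r < n)%nat -> f n = 0) -> is_series f (sum_n f r).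
Proof.
  intros Hf. apply (filterlim_ext_loc (fun _ => sum_n f r)); [| apply filterlim_const].
  exists r. intros n Hn. induction Hn as [|n Hn IH]; [reflexivity|].
  cbv beta. rewrite IH, sum_n_C_S, (Hf (S n)) by lia. symmetry. apply Cplus_0_r.
Qed.

Lemma is_series_leading_zeros (f : nat -> C) (k : nat) (l : C) :
  (forall n, (n < k)%nat -> f n = 0) -> is_series (fun m => f (k + m)%nat) l -> is_series f l.
Proof.
  intros Hf Hl. destruct k as [|k]; [exact Hl|].
  assert (H0 : @eq C (sum_n f k) 0).
  { clear Hl. assert (Hj : forall j, (j <= k)%nat -> @eq C (sum_n f j) 0).
    { induction j as [|j IH]; intros Hj; [rewrite sum_O; apply Hf; lia|].
      rewrite sum_n_C_S, IH, (Hf (S j)) by lia. apply Cplus_0_r. }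
    apply Hj, le_n. }
  apply (is_series_decr_n f (S k)); [lia|].
  match goal with |- is_series _ ?L => replace L with l end; [exact Hl|].
  change (l = l + - sum_n f k). rewrite H0. ring.
Qed.

Lemma filterlim_seq_S {U : Type} (u : nat -> U) (G : (U -> Prop) -> Prop) :
  filterlim u eventually G -> filterlim (fun n => u (S n)) eventually G.
Proof. intros Hu. eapply filterlim_comp; [apply eventually_subseq; intros; lia | exact Hu]. Qed.

Lemma filterlim_seq_S_inv {U : Type} (u : nat -> U) (G : (U -> Prop) -> Prop) :
  filterlim (fun n => u (S n)) eventually G -> filterlim u eventually G.
Proof.
  intros Hu P HP. destruct (Hu P HP) as [N HN].
  exists (S N). intros [|n] Hn; [lia | apply HN; lia].
Qed.

Lemma is_series_term_lim0 (f : nat -> C) (l : C) :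
  is_series f l -> filterlim f eventually (locally (RtoC 0)).
Proof.
  intros Hf. apply filterlim_seq_S_inv.
  assert (Hs : filterlim (sum_n f) eventually (locally l)) by exact Hf.
  assert (Hd := filterlim_Cplus _ _ _ _ (filterlim_seq_S _ _ Hs)
                  (filterlim_Cmult _ _ _ _ (filterlim_const (RtoC (-1))) Hs)).
  replace (l + -1 * l) with (RtoC 0) in Hd by ring.
  eapply filterlim_ext; [| exact Hd]. intros n. cbv beta. rewrite sum_n_C_S. ring.
Qed.

Lemma Cmod_sum_n_geom_le (f : nat -> C) (K x : R) (N : nat) :
  (0 <= x < 1)%R -> (forall n, Cmod (f n) <= K * x ^ n)%R ->
  (Cmod (sum_n f N) <= K / (1 - x))%R.
Proof.
  intros Hx Hf.
  assert (HK : (0 <= K)%R) by (specialize (Hf O); simpl in Hf; pose proof (Cmod_ge_0 (f O)); lra).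
  enough (Cmod (sum_n f N) <= K * (1 - x ^ S N) / (1 - x))%R.
  { eapply Rle_trans; [eassumption|]. pose proof (pow_le x (S N) (proj1 Hx)).
    apply Rmult_le_compat_r; [apply Rlt_le, Rinv_0_lt_compat; lra | nra]. }
  induction N as [|N IH].
  - rewrite sum_O. replace (K * (1 - x ^ 1) / (1 - x))%R with (K * x ^ 0)%R by (simpl; field; lra).
    apply Hf.
  - rewrite sum_n_C_S. eapply Rle_trans; [apply Cmod_triangle|].
    replace (K * (1 - x ^ S (S N)) / (1 - x))%R with (K * (1 - x ^ S N) / (1 - x) + K * x ^ S N)%R
      by (simpl; field; lra).
    apply Rplus_le_compat; [exact IH | apply Hf].
Qed.

(** * q-Pochhammer symbols *)

Lemma pow_n_Cpow (x : C) (n : nat) : pow_n x n = x ^ n.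
Proof. induction n as [|n IH]; [reflexivity|]. simpl. now rewrite IH. Qed.

Lemma qpoch_S (a q : C) (n : nat) : qpoch a q (S n) = qpoch a q n * (1 - a * q ^ n).
Proof. simpl. now rewrite pow_n_Cpow. Qed.

Lemma qpoch_1 (a q : C) : qpoch a q 1 = 1 - a.
Proof. rewrite qpoch_S. cbn [qpoch Cpow]. ring. Qed.

Lemma qpoch_add (a q : C) (k n : nat) :
  qpoch a q (k + n) = qpoch a q k * qpoch (a * q ^ k) q n.
Proof.
  induction n as [|n IH]; [rewrite Nat.add_0_r; simpl; ring|].
  rewrite <- plus_n_Sm, !qpoch_S, IH, Cpow_add_r. ring.
Qed.

Lemma qpoch_mul_q (a q : C) (n : nat) : (1 - a) * qpoch (a * q) q n = qpoch a q (S n).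
Proof.
  change (S n) with (1 + n)%nat. now rewrite qpoch_add, Cpow_1_r, qpoch_1.
Qed.

Lemma qpoch_shift_neq0 (a q : C) (k : nat) :
  (forall n, qpoch a q n <> 0) -> forall n, qpoch (a * q ^ k) q n <> 0.
Proof. intros Ha n E. apply (Ha (k + n)%nat). rewrite qpoch_add, E. ring. Qed.

Section QPochhammer.
Variable q : C.
Hypothesis Hq1 : (Cmod q < 1)%R.

Lemma Cmod_Cpow_le_1 (n : nat) : (0 <= Cmod q ^ n <= 1)%R.
Proof.
  pose proof (Cmod_ge_0 q).
  split; [now apply pow_le | apply pow_le_one; lra].
Qed.

Lemma is_lim_seq_Cmod_Cpow (c : R) : is_lim_seq (fun n => c * Cmod q ^ n)%R 0%R.
Proof.
  assert (Hgeom : Rabs (Cmod q) < 1) by (rewrite Rabs_pos_eq; [exact Hq1 | apply Cmod_ge_0]).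
  assert (H := is_lim_seq_scal_l _ c _ (is_lim_seq_geom _ Hgeom)).
  simpl in H. now rewrite Rmult_0_r in H.
Qed.

Lemma Cmod_Cpow_eventually_lt (c eps : R) :
  (0 < eps)%R -> eventually (fun n => c * Cmod q ^ n < eps)%R.
Proof.
  intros He.
  destruct (proj2 (is_lim_seq_spec _ _) (is_lim_seq_Cmod_Cpow c) (mkposreal eps He)) as [N HN].
  exists N. intros n Hn. specialize (HN n Hn). simpl in HN.
  rewrite Rminus_0_r in HN. eapply Rle_lt_trans; [apply Rle_abs | exact HN].
Qed.

Lemma qpoch_Cmod_le_partial (a : C) (n : nat) :
  (Cmod (qpoch a q n) <= exp (Cmod a * (1 - Cmod q ^ n) / (1 - Cmod q)))%R.
Proof.
  induction n as [|n IH].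
  - simpl. rewrite Cmod_1, Rminus_diag, Rmult_0_r, Rdiv_0_l, exp_0. lra.
  - rewrite qpoch_S, Cmod_mult.
    replace (Cmod a * (1 - Cmod q ^ S n) / (1 - Cmod q))%R
      with (Cmod a * (1 - Cmod q ^ n) / (1 - Cmod q) + Cmod a * Cmod q ^ n)%R
      by (simpl; field; lra).
    rewrite exp_plus. apply Rmult_le_compat; try apply Cmod_ge_0; [exact IH|].
    eapply Rle_trans; [apply Cmod_1_minus_le|].
    rewrite Cmod_mult, Cmod_pow. apply exp_ineq1_le.
Qed.

Definition qpoch_bound (a : C) : R := exp (Cmod a / (1 - Cmod q)).

Lemma qpoch_Cmod_le (a : C) (n : nat) : (Cmod (qpoch a q n) <= qpoch_bound a)%R.
Proof.
  eapply Rle_trans; [apply qpoch_Cmod_le_partial|].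
  assert (Hle : (Cmod a * (1 - Cmod q ^ n) / (1 - Cmod q) <= Cmod a / (1 - Cmod q))%R).
  { pose proof (Cmod_Cpow_le_1 n). pose proof (Cmod_ge_0 a).
    apply Rmult_le_compat_r; [apply Rlt_le, Rinv_0_lt_compat; lra | nra]. }
  destruct Hle as [Hlt | ->]; [left; now apply exp_increasing | apply Rle_refl].
Qed.

Lemma qpoch_Cmod_ge_partial (a : C) (n : nat) : (Cmod a <= 1)%R ->
  (1 - Cmod a * (1 - Cmod q ^ n) / (1 - Cmod q) <= Cmod (qpoch a q n))%R.
Proof.
  intros Ha. induction n as [|n IH].
  - simpl. rewrite Cmod_1, Rminus_diag, Rmult_0_r, Rdiv_0_l. lra.
  - rewrite qpoch_S, Cmod_mult.
    replace (Cmod a * (1 - Cmod q ^ S n) / (1 - Cmod q))%R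
      with (Cmod a * (1 - Cmod q ^ n) / (1 - Cmod q) + Cmod a * Cmod q ^ n)%R
      by (simpl; field; lra).
    set (s := (Cmod a * (1 - Cmod q ^ n) / (1 - Cmod q))%R) in *.
    assert (Hfac := Cmod_1_minus_ge (a * q ^ n)). rewrite Cmod_mult, Cmod_pow in Hfac.
    pose proof (Cmod_Cpow_le_1 n). pose proof (Cmod_ge_0 a).
    assert (0 <= Cmod a * Cmod q ^ n <= 1)%R by (split; nra).
    assert (0 <= s)%R.
    { unfold s. apply Rmult_le_pos; [nra | apply Rlt_le, Rinv_0_lt_compat; lra]. }
    destruct (Rle_or_lt 0 (1 - s)) as [Hs|Hs].
    + apply Rle_trans with ((1 - s) * (1 - Cmod a * Cmod q ^ n))%R; [nra|].
      apply Rmult_le_compat; nra.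
    + apply Rle_trans with 0%R; [lra | apply Rmult_le_pos; apply Cmod_ge_0].
Qed.

Lemma qpoch_Cmod_ge_half (a : C) (n : nat) :
  (Cmod a <= (1 - Cmod q) / 2)%R -> (/ 2 <= Cmod (qpoch a q n))%R.
Proof.
  intros Ha. pose proof (Cmod_ge_0 a). pose proof (Cmod_ge_0 q).
  eapply Rle_trans; [| apply qpoch_Cmod_ge_partial; lra].
  assert (Cmod a * (1 - Cmod q ^ n) / (1 - Cmod q) <= Cmod a / (1 - Cmod q))%R.
  { pose proof (Cmod_Cpow_le_1 n).
    apply Rmult_le_compat_r; [apply Rlt_le, Rinv_0_lt_compat; lra | nra]. }
  assert (Cmod a / (1 - Cmod q) <= / 2)%R.
  { apply Rmult_le_reg_r with (1 - Cmod q)%R; [lra|]. field_simplify; lra. }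
  lra.
Qed.

(* Far out, the factors [1 - a q^n] are close to 1; the finitely many first ones are nonzero. *)
Lemma qpoch_Cmod_bounded_below (a : C) :
  (forall n, qpoch a q n <> 0) -> exists m, (0 < m)%R /\ forall n, (m <= Cmod (qpoch a q n))%R.
Proof.
  intros Ha.
  assert (Hev : (0 < (1 - Cmod q) / 2)%R) by lra.
  destruct (Cmod_Cpow_eventually_lt (Cmod a) _ Hev) as [K HK].
  destruct (Cmod_bounded_below_finite (qpoch a q) K Ha) as [m [Hm HmK]].
  assert (HaK : (0 < Cmod (qpoch a q K))%R) by now apply Cmod_gt_0.
  exists (Rmin m (Cmod (qpoch a q K) / 2)). split; [apply Rmin_pos; lra|].
  intros n. destruct (Nat.lt_ge_cases n K) as [Hn|Hn].
  - eapply Rle_trans; [apply Rmin_l | now apply HmK].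
  - eapply Rle_trans; [apply Rmin_r|].
    replace n with (K + (n - K))%nat by lia. rewrite qpoch_add, Cmod_mult.
    assert (/ 2 <= Cmod (qpoch (a * q ^ K) q (n - K)))%R.
    { apply qpoch_Cmod_ge_half. rewrite Cmod_mult, Cmod_pow. left. now apply HK. }
    nra.
Qed.

Lemma qpoch_q_neq0 (n : nat) : qpoch q q n <> 0.
Proof.
  induction n as [|n IH]; [simpl; apply C1_nz|].
  rewrite qpoch_S. apply Cmult_neq_0; [exact IH|]. intros E.
  assert (H : Cmod (q * q ^ n) = 1%R).
  { replace (q * q ^ n) with (1 - (1 - q * q ^ n)) by ring. rewrite E.
    replace (1 - 0) with (RtoC 1) by ring. apply Cmod_1. }
  rewrite Cmod_mult, Cmod_pow in H. pose proof (Cmod_Cpow_le_1 n). pose proof (Cmod_ge_0 q). nra.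
Qed.

Lemma qpoch_cv (a : C) : filterlim (qpoch a q) eventually (locally (qpoch_inf a q)).
Proof.
  set (d := fun n => qpoch a q (S n) - qpoch a q n).
  assert (Hd : forall n, (Cmod (d n) <= qpoch_bound a * Cmod a * Cmod q ^ n)%R).
  { intros n. unfold d. rewrite qpoch_S.
    replace (qpoch a q n * (1 - a * q ^ n) - qpoch a q n) with (- (qpoch a q n * a * q ^ n)) by ring.
    rewrite Cmod_opp, !Cmod_mult, Cmod_pow.
    apply Rmult_le_compat_r; [apply pow_le, Cmod_ge_0|].
    apply Rmult_le_compat_r; [apply Cmod_ge_0 | apply qpoch_Cmod_le]. }
  assert (Hex : ex_series d).
  { apply (@ex_series_le C_AbsRing C_CompleteNormedModule d
             (fun n => qpoch_bound a * Cmod a * Cmod q ^ n)%R); [exact Hd|].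
    apply (ex_series_scal_l (V := R_NormedModule)), ex_series_geom.
    rewrite Rabs_pos_eq; [exact Hq1 | apply Cmod_ge_0]. }
  destruct Hex as [l Hl].
  assert (Htel : forall n, qpoch a q (S n) = 1 + sum_n d n).
  { induction n as [|n IH]; [rewrite sum_O; unfold d; cbn [qpoch]; ring|].
    rewrite sum_n_C_S, Cplus_assoc, <- IH. unfold d. ring. }
  assert (Hc : filterlim (qpoch a q) eventually (locally (1 + l))).
  { apply filterlim_seq_S_inv. eapply filterlim_ext; [intros n; symmetry; apply Htel|].
    exact (filterlim_Cplus _ _ _ _ (filterlim_const (RtoC 1)) Hl). }
  unfold qpoch_inf. now rewrite (lim_eventually_C _ _ Hc).
Qed.

Lemma qpoch_inf_neq0 (a : C) : (forall n, qpoch a q n <> 0) -> qpoch_inf a q <> 0.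
Proof.
  intros Ha E. destruct (qpoch_Cmod_bounded_below a Ha) as [m [Hm Hb]].
  assert (H := Cmod_lim_ge _ _ _ (qpoch_cv a) Hb). rewrite E, Cmod_0 in H. lra.
Qed.

Lemma qpoch_inf_shift (a : C) (k : nat) : qpoch_inf a q = qpoch a q k * qpoch_inf (a * q ^ k) q.
Proof.
  apply (filterlim_C_unique (fun n => qpoch a q (k + n))).
  - eapply filterlim_comp; [apply eventually_subseq; intros; lia | apply qpoch_cv].
  - eapply filterlim_ext; [intros n; symmetry; apply qpoch_add|].
    exact (filterlim_Cmult _ _ _ _ (filterlim_const _) (qpoch_cv _)).
Qed.

Lemma Cpow_lim0 : filterlim (fun n => q ^ n) eventually (locally (RtoC 0)).
Proof.
  apply (filterlim_C_of_Cmod_le _ _ (fun n => 1 * Cmod q ^ n)%R); [| apply is_lim_seq_Cmod_Cpow].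
  exists O. intros n _. replace (q ^ n - 0) with (q ^ n) by ring. rewrite Cmod_pow. lra.
Qed.

End QPochhammer.

(** * The q-Gauss sum *)

Section QGauss.
Variable q : C.
Hypothesis Hq1 : (Cmod q < 1)%R.

Definition gauss_term (A B z : C) (n : nat) : C :=
  qpoch A q n * qpoch B q n / (qpoch q q n * qpoch (A * B * z) q n) * z ^ n.

Definition gauss_sum (A B z : C) : C :=
  @lim C_CompleteNormedModule (filtermap (sum_n (gauss_term A B z)) eventually).

Lemma gauss_term_Cmod_le (A B z : C) (mq mC : R) :
  (0 < mq)%R -> (0 < mC)%R -> (forall n, mq <= Cmod (qpoch q q n))%R ->
  (forall n, mC <= Cmod (qpoch (A * B * z) q n))%R ->
  forall n, (Cmod (gauss_term A B z n) <= qpoch_bound q A * qpoch_bound q B / (mq * mC) * Cmod z ^ n)%R.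
Proof.
  intros Hmq HmC Hq HC n. unfold gauss_term.
  assert (Hqn : qpoch q q n <> 0)
    by (intros E; specialize (Hq n); rewrite E, Cmod_0 in Hq; lra).
  assert (HCn : qpoch (A * B * z) q n <> 0)
    by (intros E; specialize (HC n); rewrite E, Cmod_0 in HC; lra).
  rewrite Cmod_mult, Cmod_div, !Cmod_mult, Cmod_pow by (now apply Cmult_neq_0).
  apply Rmult_le_compat_r; [apply pow_le, Cmod_ge_0|].
  apply Rmult_le_compat.
  - apply Rmult_le_pos; apply Cmod_ge_0.
  - apply Rlt_le, Rinv_0_lt_compat, Rmult_lt_0_compat; now apply Cmod_gt_0.
  - apply Rmult_le_compat; try apply Cmod_ge_0; apply qpoch_Cmod_le; assumption.
  - apply Rinv_le_contravar; [now apply Rmult_lt_0_compat|].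
    apply Rmult_le_compat; lra || auto.
Qed.

Lemma gauss_series (A B z : C) : (Cmod z < 1)%R -> (forall n, qpoch (A * B * z) q n <> 0) ->
  is_series (gauss_term A B z) (gauss_sum A B z).
Proof.
  intros Hz HC.
  destruct (qpoch_Cmod_bounded_below q Hq1 q (qpoch_q_neq0 q Hq1)) as [mq [Hmq Hq]].
  destruct (qpoch_Cmod_bounded_below q Hq1 _ HC) as [mC [HmC HCb]].
  assert (Hex : ex_series (gauss_term A B z)).
  { apply (@ex_series_le C_AbsRing C_CompleteNormedModule _
             (fun n => qpoch_bound q A * qpoch_bound q B / (mq * mC) * Cmod z ^ n)%R).
    - intros n. now apply gauss_term_Cmod_le.
    - apply (ex_series_scal_l (V := R_NormedModule)), ex_series_geom.
      rewrite Rabs_pos_eq; [exact Hz | apply Cmod_ge_0]. }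
  destruct Hex as [l Hl]. unfold gauss_sum. now rewrite (lim_sum_n_is_series _ _ Hl).
Qed.

Lemma gauss_term_0 (A B z : C) : gauss_term A B z O = 1.
Proof. unfold gauss_term. cbn [qpoch Cpow]. field. Qed.

Lemma gauss_term_S (A B z : C) (n : nat) : qpoch (A * B * z) q (S n) <> 0 ->
  gauss_term A B z (S n) = gauss_term A B z n
    * ((1 - A * q ^ n) * (1 - B * q ^ n) * z / ((1 - q * q ^ n) * (1 - A * B * z * q ^ n))).
Proof.
  intros HC. pose proof (qpoch_q_neq0 q Hq1 (S n)) as Hq.
  rewrite qpoch_S in HC, Hq. apply Cmult_neq_0_inv in HC, Hq.
  unfold gauss_term. rewrite !qpoch_S. cbn [Cpow]. field. intuition.
Qed.

Lemma gauss_term_mul_q (A B z : C) (n : nat) : qpoch (A * B * z) q (S n) <> 0 ->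
  gauss_term A B (z * q) n = gauss_term A B z n * q ^ n * (1 - A * B * z) / (1 - A * B * z * q ^ n).
Proof.
  intros HC. set (c := A * B * z) in *.
  assert (Hc1 : 1 - c <> 0).
  { rewrite <- qpoch_mul_q in HC. now apply Cmult_neq_0_inv in HC. }
  assert (Hcq : qpoch (A * B * (z * q)) q n = qpoch c q n * (1 - c * q ^ n) / (1 - c)).
  { rewrite <- qpoch_S, <- qpoch_mul_q. replace (A * B * (z * q)) with (c * q) by (unfold c; ring).
    now field. }
  pose proof (qpoch_q_neq0 q Hq1 n).
  rewrite qpoch_S in HC. apply Cmult_neq_0_inv in HC as [HCn HCl].
  unfold gauss_term. rewrite Hcq, Cpow_mult_l. fold c. field. auto.
Qed.

Lemma gauss_term_contiguous (A B z : C) (n : nat) : qpoch (A * B * z) q (S n) <> 0 ->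
  (1 - A * B * z) * (q ^ n - z) * gauss_term A B z n
    - (1 - A * z) * (1 - B * z) * gauss_term A B (z * q) n
  = - (1 - A * B * z) * (1 - q ^ S n) * gauss_term A B z (S n).
Proof.
  intros HC. rewrite gauss_term_mul_q, gauss_term_S by exact HC.
  pose proof (qpoch_q_neq0 q Hq1 (S n)) as Hq.
  rewrite qpoch_S in HC, Hq. apply Cmult_neq_0_inv in HC as [_ HCl], Hq as [_ Hql].
  simpl Cpow. field. auto.
Qed.

Lemma gauss_partial_sums_contiguous (A B z : C) (N : nat) :
  (forall n, qpoch (A * B * z) q n <> 0) ->
  (1 - z) * (1 - A * B * z) * sum_n (gauss_term A B z) N
    - (1 - A * z) * (1 - B * z) * sum_n (gauss_term A B (z * q)) N
  = - (1 - A * B * z) * (1 - q ^ S N) * gauss_term A B z (S N).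
Proof.
  intros HC. induction N as [|N IH].
  - rewrite <- gauss_term_contiguous by apply HC. rewrite !sum_O, !gauss_term_0. simpl Cpow. ring.
  - rewrite !sum_n_C_S.
    transitivity ((1 - z) * (1 - A * B * z) * sum_n (gauss_term A B z) N
      - (1 - A * z) * (1 - B * z) * sum_n (gauss_term A B (z * q)) N
      + (1 - z) * (1 - A * B * z) * gauss_term A B z (S N)
      - (1 - A * z) * (1 - B * z) * gauss_term A B (z * q) (S N)); [ring|].
    rewrite IH, <- (gauss_term_contiguous A B z (S N)) by apply HC. ring.
Qed.

Lemma gauss_sum_contiguous (A B z : C) : (Cmod z < 1)%R -> (forall n, qpoch (A * B * z) q n <> 0) ->
  (1 - z) * (1 - A * B * z) * gauss_sum A B z = (1 - A * z) * (1 - B * z) * gauss_sum A B (z * q).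
Proof.
  intros Hz HC.
  assert (Hzq : (Cmod (z * q) < 1)%R).
  { rewrite Cmod_mult. pose proof (Cmod_ge_0 z). pose proof (Cmod_ge_0 q). nra. }
  assert (HCq : forall n, qpoch (A * B * (z * q)) q n <> 0).
  { intros n E. apply (HC (S n)). rewrite <- qpoch_mul_q.
    replace (A * B * z * q) with (A * B * (z * q)) by ring. rewrite E. ring. }
  pose proof (gauss_series A B z Hz HC) as Hs. pose proof (gauss_series A B (z * q) Hzq HCq) as Hsq.
  assert (HL := filterlim_Cplus _ _ _ _
    (filterlim_Cmult _ _ _ _ (filterlim_const ((1 - z) * (1 - A * B * z))) Hs)
    (filterlim_Cmult _ _ _ _ (filterlim_const (- ((1 - A * z) * (1 - B * z)))) Hsq)).
  assert (HR := filterlim_Cmult _ _ _ _ (filterlim_const (- (1 - A * B * z)))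
    (filterlim_Cmult _ _ _ _
      (filterlim_Cplus _ _ _ _ (filterlim_const (RtoC 1))
        (filterlim_Cmult _ _ _ _ (filterlim_const (RtoC (-1))) (filterlim_seq_S _ _ (Cpow_lim0 q Hq1))))
      (filterlim_seq_S _ _ (is_series_term_lim0 _ _ Hs)))).
  assert (HR' : filterlim (fun N => (1 - z) * (1 - A * B * z) * sum_n (gauss_term A B z) N
      + - ((1 - A * z) * (1 - B * z)) * sum_n (gauss_term A B (z * q)) N)
      eventually (locally (- (1 - A * B * z) * ((1 + -1 * 0) * 0)))).
  { eapply filterlim_ext; [| exact HR]. intros N. cbv beta.
    transitivity (- (1 - A * B * z) * (1 - q ^ S N) * gauss_term A B z (S N)); [ring|].
    rewrite <- gauss_partial_sums_contiguous by exact HC. ring. }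
  assert (E := filterlim_C_unique _ _ _ HL HR').
  transitivity ((1 - z) * (1 - A * B * z) * gauss_sum A B z
    + - ((1 - A * z) * (1 - B * z)) * gauss_sum A B (z * q)
    + (1 - A * z) * (1 - B * z) * gauss_sum A B (z * q)); [ring|].
  rewrite E. ring.
Qed.

Lemma gauss_sum_iterate (A B z : C) (N : nat) :
  (Cmod z < 1)%R -> (forall n, qpoch (A * B * z) q n <> 0) ->
  qpoch z q N * qpoch (A * B * z) q N * gauss_sum A B z
  = qpoch (A * z) q N * qpoch (B * z) q N * gauss_sum A B (z * q ^ N).
Proof.
  intros Hz HC. induction N as [|N IH].
  - cbn [qpoch Cpow]. rewrite (Cmult_1_r z). ring.
  - set (w := z * q ^ N).
    assert (Hw : (Cmod w < 1)%R).
    { unfold w. rewrite Cmod_mult, Cmod_pow. pose proof (Cmod_Cpow_le_1 q Hq1 N).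
      pose proof (Cmod_ge_0 z). nra. }
    assert (HCw : forall n, qpoch (A * B * w) q n <> 0).
    { intros n. replace (A * B * w) with (A * B * z * q ^ N) by (unfold w; ring).
      now apply qpoch_shift_neq0. }
    rewrite !qpoch_S. replace (z * q ^ S N) with (w * q) by (unfold w; simpl; ring).
    transitivity (qpoch z q N * qpoch (A * B * z) q N * gauss_sum A B z * ((1 - w) * (1 - A * B * w)));
      [unfold w; ring|].
    rewrite IH. fold w.
    transitivity (qpoch (A * z) q N * qpoch (B * z) q N
                  * ((1 - w) * (1 - A * B * w) * gauss_sum A B w)); [ring|].
    rewrite gauss_sum_contiguous by assumption. unfold w. ring.
Qed.

Lemma gauss_sum_near_1 (A B w : C) (mq : R) :
  (0 < mq)%R -> (forall n, mq <= Cmod (qpoch q q n))%R ->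
  (Cmod w <= / 2)%R -> (Cmod (A * B * w) <= (1 - Cmod q) / 2)%R ->
  (Cmod (gauss_sum A B w - 1) <= 2 * (qpoch_bound q A * qpoch_bound q B / (mq * / 2)) * Cmod w)%R.
Proof.
  intros Hmq Hq Hw HABw.
  set (M := (qpoch_bound q A * qpoch_bound q B / (mq * / 2))%R).
  assert (Hlow : forall n, (/ 2 <= Cmod (qpoch (A * B * w) q n))%R)
    by (intros; now apply qpoch_Cmod_ge_half).
  assert (HC : forall n, qpoch (A * B * w) q n <> 0).
  { intros n E. specialize (Hlow n). rewrite E, Cmod_0 in Hlow. lra. }
  assert (Hb := gauss_term_Cmod_le A B w mq (/ 2) Hmq ltac:(lra) Hq Hlow).
  fold M in Hb.
  assert (Htail : is_series (fun n => gauss_term A B w (S n)) (gauss_sum A B w - 1)).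
  { apply is_series_incr_1. rewrite gauss_term_0.
    change (is_series (gauss_term A B w) (gauss_sum A B w - 1 + 1)).
    replace (gauss_sum A B w - 1 + 1) with (gauss_sum A B w) by ring.
    apply gauss_series; [lra | exact HC]. }
  pose proof (Cmod_ge_0 w).
  apply (Cmod_lim_le _ _ _ Htail). intros N.
  eapply Rle_trans; [apply (Cmod_sum_n_geom_le _ (M * Cmod w) (Cmod w)); [lra|]|].
  - intros n. rewrite Rmult_assoc. apply Hb.
  - apply Rmult_le_reg_r with (1 - Cmod w)%R; [lra|].
    unfold Rdiv. rewrite Rmult_assoc, Rinv_l by lra.
    assert (0 <= M)%R.
    { unfold M, qpoch_bound. apply Rmult_le_pos; [apply Rmult_le_pos; apply Rlt_le, exp_pos|].
      apply Rlt_le, Rinv_0_lt_compat. lra. }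
    assert (0 <= M * Cmod w)%R by now apply Rmult_le_pos.
    nra.
Qed.

Lemma gauss_sum_lim_1 (A B z : C) : (Cmod z < 1)%R ->
  filterlim (fun N => gauss_sum A B (z * q ^ N)) eventually (locally (RtoC 1)).
Proof.
  intros Hz.
  destruct (qpoch_Cmod_bounded_below q Hq1 q (qpoch_q_neq0 q Hq1)) as [mq [Hmq Hq]].
  set (M := (qpoch_bound q A * qpoch_bound q B / (mq * / 2))%R).
  apply (filterlim_C_of_Cmod_le _ _ (fun N => 2 * M * Cmod z * Cmod q ^ N)%R);
    [| exact (is_lim_seq_Cmod_Cpow q Hq1 _)].
  assert (H1 : (0 < (1 - Cmod q) / 2)%R) by lra.
  assert (H2 : (0 < / 2)%R) by lra.
  generalize (filter_and _ _ (Cmod_Cpow_eventually_lt q Hq1 (Cmod (A * B * z)) _ H1)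
                             (Cmod_Cpow_eventually_lt q Hq1 (Cmod z) _ H2)).
  apply filter_imp. intros N [HABz Hzq].
  eapply Rle_trans; [apply (gauss_sum_near_1 _ _ _ mq Hmq Hq)|].
  - rewrite Cmod_mult, Cmod_pow. lra.
  - replace (A * B * (z * q ^ N)) with (A * B * z * q ^ N) by ring.
    rewrite Cmod_mult, Cmod_pow. lra.
  - fold M. rewrite Cmod_mult, Cmod_pow. apply Req_le. ring.
Qed.

Theorem q_gauss (A B z : C) : (Cmod z < 1)%R -> (forall n, qpoch (A * B * z) q n <> 0) ->
  gauss_sum A B z * (qpoch_inf z q * qpoch_inf (A * B * z) q)
  = qpoch_inf (A * z) q * qpoch_inf (B * z) q.
Proof.
  intros Hz HC.
  assert (HL := filterlim_Cmult _ _ _ _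
    (filterlim_Cmult _ _ _ _ (qpoch_cv q Hq1 z) (qpoch_cv q Hq1 (A * B * z)))
    (filterlim_const (gauss_sum A B z))).
  assert (HR := filterlim_Cmult _ _ _ _
    (filterlim_Cmult _ _ _ _ (qpoch_cv q Hq1 (A * z)) (qpoch_cv q Hq1 (B * z)))
    (gauss_sum_lim_1 A B z Hz)).
  rewrite Cmult_1_r in HR.
  assert (HR' : filterlim (fun N => qpoch z q N * qpoch (A * B * z) q N * gauss_sum A B z)
                  eventually (locally (qpoch_inf (A * z) q * qpoch_inf (B * z) q))).
  { eapply filterlim_ext; [| exact HR]. intros N. cbv beta.
    symmetry. now apply gauss_sum_iterate. }
  rewrite Cmult_comm. exact (filterlim_C_unique _ _ _ HL HR').
Qed.
End QGauss.

(** * Newton expansion in the nodes [q^-j] *)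

Fixpoint qprod (w a p : C) (r : nat) : C :=
  match r with O => 1 | S j => qprod w a p j * (w - a * p ^ j) end.

Lemma qpoch_qprod (a q x : C) (r : nat) : x <> 0 -> qpoch (a * x) q r = x ^ r * qprod (/ x) a q r.
Proof.
  intros Hx. induction r as [|r IH]; [cbn [qpoch qprod Cpow]; ring|].
  rewrite qpoch_S, IH. cbn [qprod Cpow]. field. exact Hx.
Qed.

Notation newton_basis q x k := (qprod x 1 (/ q) k).

Section NewtonExpansion.
Variable q : C.
Hypothesis Hq : q <> 0.

Lemma newton_basis_vanish (n k : nat) : (n < k)%nat -> newton_basis q (/ q ^ n) k = 0.
Proof.
  induction k as [|k IH]; intros Hnk; [lia|]. cbn [qprod].
  destruct (Nat.eq_dec n k) as [->|Hne].
  - rewrite Cpow_inv by exact Hq. ring.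
  - rewrite IH by lia. ring.
Qed.

Lemma newton_basis_at_node (k m : nat) :
  newton_basis q (/ q ^ (k + m)) k * q ^ (k * (k + m)) * qpoch q q m = qpoch q q (k + m).
Proof.
  revert m. induction k as [|k IH]; intros m; [cbn [qprod Cpow]; simpl; ring|].
  replace (S k + m)%nat with (k + S m)%nat by lia.
  rewrite <- IH, qpoch_S. cbn [qprod]. rewrite Cpow_inv by exact Hq.
  replace (S k * (k + S m))%nat with (k * (k + S m) + (k + S m))%nat by lia.
  rewrite !Cpow_add_r. cbn [Cpow].
  pose proof (Cpow_nz q k Hq). pose proof (Cpow_nz q m Hq).
  field. auto.
Qed.

Lemma newton_basis_div_q (x : C) (k : nat) :
  newton_basis q (x / q) (S k) = (x - q) / q ^ S k * newton_basis q x k.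
Proof.
  induction k as [|k IH].
  - cbn [qprod Cpow]. field. exact Hq.
  - change (newton_basis q (x / q) (S (S k)))
      with (newton_basis q (x / q) (S k) * (x / q - 1 * (/ q) ^ S k)).
    rewrite IH. cbn [qprod Cpow]. rewrite !Cpow_inv by exact Hq.
    pose proof (Cpow_nz q k Hq). field. auto.
Qed.

Lemma newton_basis_qpoch (V z : C) (k : nat) : z <> 0 ->
  newton_basis q V k * z ^ k * qpoch (q / z) q k = qpoch V q k * q ^ k * qpoch (z / q ^ k) q k.
Proof.
  intros Hz. induction k as [|k IH]; [cbn [qprod qpoch Cpow]; ring|].
  assert (E : qpoch (z / q ^ S k) q (S k) = (1 - z / q ^ S k) * qpoch (z / q ^ k) q k).
  { change (S k) with (1 + k)%nat at 2. rewrite qpoch_add, qpoch_1, Cpow_1_r.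
    f_equal. f_equal. cbn [Cpow]. field. split; [apply Cpow_nz|]; exact Hq. }
  rewrite E, !qpoch_S. cbn [qprod Cpow]. rewrite Cpow_inv by exact Hq.
  transitivity (newton_basis q V k * z ^ k * qpoch (q / z) q k
                * ((V - / q ^ k) * z * (1 - q / z * q ^ k))); [ring|].
  rewrite IH. pose proof (Cpow_nz q k Hq). field. auto.
Qed.

Section Coefficients.
Variable D : C.
Hypothesis HD : forall n, qpoch D q n <> 0.
Hypothesis Hqq : forall n, qpoch q q n <> 0.

Definition newton_coeff (r k : nat) : C :=
  newton_basis q (/ q ^ r) k * q ^ (k * k) * qpoch D q r / (qpoch q q k * qpoch D q k).

Lemma newton_coeff_0 (r : nat) : newton_coeff r 0 = qpoch D q r.
Proof. unfold newton_coeff. cbn [qprod qpoch Cpow Nat.mul]. field. Qed.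

Lemma newton_coeff_top (r : nat) : newton_coeff r (S r) = 0.
Proof.
  unfold newton_coeff. cbn [qprod]. rewrite Cpow_inv by exact Hq.
  replace (/ q ^ r - 1 * / q ^ r) with (RtoC 0) by ring.
  field. split; auto.
Qed.

Lemma newton_coeff_S (r k : nat) :
  newton_coeff (S r) (S k) = newton_coeff r k + (/ q ^ S k - D * q ^ r) * newton_coeff r (S k).
Proof.
  unfold newton_coeff.
  replace (/ q ^ S r) with (/ q ^ r / q) by (cbn [Cpow]; field; split; [apply Cpow_nz|]; exact Hq).
  rewrite newton_basis_div_q. cbn [qprod]. rewrite !qpoch_S, Cpow_inv by exact Hq.
  replace (S k * S k)%nat with (k * k + (k + k + 1))%nat by lia. rewrite !Cpow_add_r.
  pose proof (HD k). pose proof (HD r). pose proof (HD (S k)) as HDS. pose proof (Hqq k).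
  pose proof (Hqq (S k)) as HqS. rewrite qpoch_S in HDS, HqS.
  apply Cmult_neq_0_inv in HDS as [_ HDS], HqS as [_ HqS].
  pose proof (Cpow_nz q k Hq). pose proof (Cpow_nz q r Hq).
  cbn [Cpow]. field. repeat split; assumption.
Qed.

Lemma qprod_newton_expansion (w : C) (r : nat) :
  qprod w D q r = sum_n (fun k => newton_coeff r k * newton_basis q w k) r.
Proof.
  induction r as [|r IH]; [rewrite sum_O, newton_coeff_0; cbn [qprod qpoch]; ring|].
  pose (g := fun k => (/ q ^ k - D * q ^ r) * newton_coeff r k * newton_basis q w k).
  assert (Hg : @eq C (sum_n g r) (g O + sum_n (fun k => g (S k)) r)).
  { assert (Hg0 : g (S r) = 0) by (unfold g; rewrite newton_coeff_top; ring).
    rewrite <- sum_n_C_first, sum_n_C_S, Hg0. symmetry. apply Cplus_0_r. }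
  cbn [qprod]. rewrite IH, sum_n_C_first.
  transitivity (sum_n (fun k => newton_coeff r k * newton_basis q w (S k)) r + sum_n g r).
  { rewrite <- sum_n_C_plus, Cmult_comm, sum_n_C_scal. apply sum_n_C_ext. intros k.
    unfold g. cbn [qprod]. rewrite Cpow_inv by exact Hq. ring. }
  transitivity (g O + sum_n (fun k => newton_coeff r k * newton_basis q w (S k) + g (S k)) r).
  { rewrite Hg, sum_n_C_plus. ring. }
  f_equal.
  - unfold g. rewrite !newton_coeff_0, qpoch_S. cbn [qprod Cpow]. field.
  - apply sum_n_C_ext. intros k. unfold g. rewrite newton_coeff_S. ring.
Qed.

End Coefficients.

Lemma newton_basis_0_neq0 (k : nat) : newton_basis q 0 k <> 0.
Proof.
  induction k as [|k IH]; cbn [qprod]; [apply C1_nz|].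
  apply Cmult_neq_0; [exact IH|]. rewrite Cpow_inv by exact Hq. intros E. apply C1_nz.
  transitivity (- (q ^ k * (0 - 1 * / q ^ k))); [field; now apply Cpow_nz | rewrite E; ring].
Qed.

Lemma qpoch_div_Cpow_neq0 (z : C) (k : nat) : z <> 0 -> qpoch (q / z) q k <> 0 ->
  qpoch (z / q ^ k) q k <> 0.
Proof.
  intros Hz Hqz E.
  assert (H0 : forall n, qpoch 0 q n = 1).
  { induction n as [|n IH]; [reflexivity|]. rewrite qpoch_S, IH. ring. }
  assert (H := newton_basis_qpoch 0 z k Hz). rewrite H0, E, Cmult_0_r in H.
  apply Cmult_neq_0 in H; [easy | apply Cmult_neq_0 | exact Hqz].
  - apply newton_basis_0_neq0.
  - now apply Cpow_nz.
Qed.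
End NewtonExpansion.

(** * The transformation *)

Section Transformation.
Variables (q A B z0 D : C) (r : nat).
Hypothesis Hq : q <> 0.
Hypothesis Hq1 : (Cmod q < 1)%R.
Hypothesis Hz0 : z0 <> 0.
Hypothesis HC : forall n, qpoch (A * B * z0) q n <> 0.
Hypothesis HD : forall n, qpoch D q n <> 0.
Hypothesis HZ : forall n, qpoch (q / z0) q n <> 0.
Hypothesis HZ0 : forall n, qpoch z0 q n <> 0.
Hypothesis Hzr : (Cmod (z0 / q ^ r) < 1)%R.

Lemma phi32_term_newton_expansion (n : nat) :
  phi32_term A B (D * q ^ r) (A * B * z0) D q (z0 / q ^ r) n
  = sum_n (fun k => newton_coeff q D r k / qpoch D q r
                    * (gauss_term q A B z0 n * newton_basis q (/ q ^ n) k)) r.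
Proof.
  transitivity (gauss_term q A B z0 n / qpoch D q r * qprod (/ q ^ n) D q r).
  - assert (Hqn : q ^ n <> 0) by now apply Cpow_nz.
    assert (E1 : qpoch (D * q ^ r) q n = qpoch D q n * qpoch (D * q ^ n) q r / qpoch D q r).
    { rewrite <- qpoch_add, Nat.add_comm, qpoch_add. field. apply HD. }
    assert (E2 := qpoch_qprod D q (q ^ n) r Hqn).
    assert (E3 : (z0 / q ^ r) ^ n = z0 ^ n / (q ^ n) ^ r).
    { unfold Cdiv. rewrite Cpow_mult_l, (Cpow_inv (q ^ r) n (Cpow_nz q r Hq)).
      now rewrite <- !Cpow_mult_r, Nat.mul_comm. }
    unfold phi32_term, gauss_term. rewrite (pow_n_Cpow (z0 / q ^ r) n), E1, E2, E3.
    pose proof (HD n). pose proof (HD r). pose proof (HC n). pose proof (qpoch_q_neq0 q Hq1 n).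
    pose proof (Cpow_nz _ r Hqn). field. repeat split; assumption.
  - rewrite (qprod_newton_expansion q Hq D HD (qpoch_q_neq0 q Hq1)), sum_n_C_scal.
    apply sum_n_C_ext. intros k. field. apply HD.
Qed.

Lemma gauss_term_newton_shift (k m : nat) :
  gauss_term q A B z0 (k + m) * newton_basis q (/ q ^ (k + m)) k
  = qpoch A q k * qpoch B q k * z0 ^ k / (q ^ (k * k) * qpoch (A * B * z0) q k)
    * gauss_term q (A * q ^ k) (B * q ^ k) (z0 / q ^ k) m.
Proof.
  assert (Hqk : q ^ k <> 0) by now apply Cpow_nz.
  assert (Hnode := newton_basis_at_node q Hq k m).
  assert (Hbasis : newton_basis q (/ q ^ (k + m)) k
                   = qpoch q q (k + m) / (q ^ (k * k) * (q ^ k) ^ m * qpoch q q m)).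
  { assert (Hpow : q ^ (k * (k + m)) = q ^ (k * k) * (q ^ k) ^ m)
      by (rewrite <- Cpow_mult_r, <- Cpow_add_r; f_equal; lia).
    rewrite <- Hnode, Hpow.
    pose proof (qpoch_q_neq0 q Hq1 m). pose proof (Cpow_nz _ (k * k) Hq). pose proof (Cpow_nz _ m Hqk).
    field. repeat split; assumption. }
  assert (Hargs : A * q ^ k * (B * q ^ k) * (z0 / q ^ k) = A * B * z0 * q ^ k) by (field; exact Hqk).
  unfold gauss_term. rewrite Hbasis, Hargs, !qpoch_add, Cpow_add_r.
  assert (Hz : (z0 / q ^ k) ^ m = z0 ^ m / (q ^ k) ^ m).
  { unfold Cdiv. now rewrite Cpow_mult_l, (Cpow_inv (q ^ k) m Hqk). }
  rewrite Hz.
  pose proof (qpoch_q_neq0 q Hq1 m). pose proof (qpoch_q_neq0 q Hq1 (k + m)) as Hkm.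
  rewrite qpoch_add in Hkm. apply Cmult_neq_0_inv in Hkm as [? ?].
  pose proof (HC k). pose proof (qpoch_shift_neq0 _ _ k HC m). pose proof (Cpow_nz _ (k * k) Hq).
  pose proof (Cpow_nz _ m Hqk).
  field. repeat split; assumption.
Qed.

Lemma Cmod_div_Cpow_lt_1 (k : nat) : (k <= r)%nat -> (Cmod (z0 / q ^ k) < 1)%R.
Proof.
  intros Hk.
  replace (z0 / q ^ k) with (z0 / q ^ r * q ^ (r - k)).
  - rewrite Cmod_mult, Cmod_pow. pose proof (Cmod_ge_0 (z0 / q ^ r)).
    pose proof (Cmod_ge_0 q). assert (Cmod q ^ (r - k) <= 1)%R by (apply pow_le_one; lra). nra.
  - replace r with (k + (r - k))%nat at 1 by lia. rewrite Cpow_add_r.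
    pose proof (Cpow_nz q k Hq). pose proof (Cpow_nz q (r - k) Hq). field. split; assumption.
Qed.

Lemma shifted_gauss_denominator_neq0 (k n : nat) :
  qpoch (A * q ^ k * (B * q ^ k) * (z0 / q ^ k)) q n <> 0.
Proof.
  replace (A * q ^ k * (B * q ^ k) * (z0 / q ^ k)) with (A * B * z0 * q ^ k)
    by (field; now apply Cpow_nz).
  now apply qpoch_shift_neq0.
Qed.

Lemma gauss_newton_series (k : nat) : (k <= r)%nat ->
  is_series (fun n => gauss_term q A B z0 n * newton_basis q (/ q ^ n) k)
    (qpoch A q k * qpoch B q k * z0 ^ k / (q ^ (k * k) * qpoch (A * B * z0) q k)
     * gauss_sum q (A * q ^ k) (B * q ^ k) (z0 / q ^ k)).
Proof.
  intros Hk. apply (is_series_leading_zeros _ k).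
  - intros n Hn. rewrite newton_basis_vanish by assumption. ring.
  - eapply is_series_ext; [intros m; symmetry; apply gauss_term_newton_shift|].
    apply is_series_Cmult_l, gauss_series; [exact Hq1 | now apply Cmod_div_Cpow_lt_1 |].
    apply shifted_gauss_denominator_neq0.
Qed.

Lemma gauss_sum_shifted (k : nat) : (k <= r)%nat ->
  gauss_sum q (A * q ^ k) (B * q ^ k) (z0 / q ^ k)
  = qpoch_inf (A * z0) q * qpoch_inf (B * z0) q
    / (qpoch (z0 / q ^ k) q k * qpoch_inf z0 q * qpoch_inf (A * B * z0 * q ^ k) q).
Proof.
  intros Hk. assert (Hqk : q ^ k <> 0) by now apply Cpow_nz.
  assert (Hgauss := q_gauss q Hq1 _ _ _ (Cmod_div_Cpow_lt_1 k Hk) (shifted_gauss_denominator_neq0 k)).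
  replace (A * q ^ k * (B * q ^ k) * (z0 / q ^ k)) with (A * B * z0 * q ^ k) in Hgauss
    by (field; exact Hqk).
  replace (A * q ^ k * (z0 / q ^ k)) with (A * z0) in Hgauss by (field; exact Hqk).
  replace (B * q ^ k * (z0 / q ^ k)) with (B * z0) in Hgauss by (field; exact Hqk).
  rewrite (qpoch_inf_shift q Hq1 (z0 / q ^ k) k) in Hgauss.
  replace (z0 / q ^ k * q ^ k) with z0 in Hgauss by (field; exact Hqk).
  rewrite <- Hgauss.
  pose proof (qpoch_div_Cpow_neq0 q Hq z0 k Hz0 (HZ k)).
  pose proof (qpoch_inf_neq0 q Hq1 z0 HZ0).
  pose proof (qpoch_inf_neq0 q Hq1 _ (qpoch_shift_neq0 _ _ k HC)).
  field. repeat split; assumption.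
Qed.

Lemma newton_term_closed_form (k : nat) : (k <= r)%nat ->
  newton_coeff q D r k / qpoch D q r
  * (qpoch A q k * qpoch B q k * z0 ^ k / (q ^ (k * k) * qpoch (A * B * z0) q k)
     * gauss_sum q (A * q ^ k) (B * q ^ k) (z0 / q ^ k))
  = qpoch_inf (A * z0) q * qpoch_inf (B * z0) q / (qpoch_inf z0 q * qpoch_inf (A * B * z0) q)
    * phi32_term A (/ q ^ r) B (q / z0) D q q k.
Proof.
  intros Hk. rewrite gauss_sum_shifted by exact Hk.
  rewrite (qpoch_inf_shift q Hq1 (A * B * z0) k).
  assert (Hbasis := newton_basis_qpoch q Hq (/ q ^ r) z0 k Hz0).
  assert (Hr : qpoch (/ q ^ r) q k = newton_basis q (/ q ^ r) k * z0 ^ k * qpoch (q / z0) q k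
                                      / (q ^ k * qpoch (z0 / q ^ k) q k)).
  { rewrite Hbasis. pose proof (qpoch_div_Cpow_neq0 q Hq z0 k Hz0 (HZ k)).
    pose proof (Cpow_nz q k Hq). field. split; assumption. }
  unfold phi32_term, newton_coeff. rewrite (pow_n_Cpow q k), Hr.
  pose proof (qpoch_div_Cpow_neq0 q Hq z0 k Hz0 (HZ k)).
  pose proof (qpoch_inf_neq0 q Hq1 z0 HZ0).
  pose proof (qpoch_inf_neq0 q Hq1 _ (qpoch_shift_neq0 _ _ k HC)).
  pose proof (HD r). pose proof (HD k). pose proof (HC k). pose proof (HZ k).
  pose proof (qpoch_q_neq0 q Hq1 k). pose proof (Cpow_nz q k Hq). pose proof (Cpow_nz q (k * k) Hq).
  field. repeat split; assumption.
Qed.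

Lemma phi32_terminating :
  is_series (phi32_term A (/ q ^ r) B (q / z0) D q q)
    (sum_n (phi32_term A (/ q ^ r) B (q / z0) D q q) r).
Proof.
  apply is_series_terminating. intros n Hn. unfold phi32_term.
  replace n with (S r + (n - S r))%nat by lia.
  rewrite (qpoch_add (/ q ^ r) q (S r)), qpoch_S.
  replace (1 - / q ^ r * q ^ r) with (RtoC 0) by (field; now apply Cpow_nz).
  unfold Cdiv. ring.
Qed.

Theorem phi32_transformation :
  phi32 A B (D * q ^ r) (A * B * z0) D q (z0 / q ^ r)
  = qpoch_inf (A * z0) q * qpoch_inf (B * z0) q / (qpoch_inf z0 q * qpoch_inf (A * B * z0) q)
    * phi32 A (/ q ^ r) B (q / z0) D q q.
Proof.
  assert (Hlhs : is_series (phi32_term A B (D * q ^ r) (A * B * z0) D q (z0 / q ^ r))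
    (sum_n (fun k => newton_coeff q D r k / qpoch D q r
       * (qpoch A q k * qpoch B q k * z0 ^ k / (q ^ (k * k) * qpoch (A * B * z0) q k)
          * gauss_sum q (A * q ^ k) (B * q ^ k) (z0 / q ^ k))) r)).
  { eapply is_series_ext; [intros n; symmetry; apply phi32_term_newton_expansion|].
    apply (is_series_sum_n (fun k n => _ * (gauss_term q A B z0 n * newton_basis q (/ q ^ n) k))).
    intros k Hk. apply is_series_Cmult_l, gauss_newton_series, Hk. }
  unfold phi32. rewrite (lim_sum_n_is_series _ _ Hlhs), (lim_sum_n_is_series _ _ phi32_terminating).
  rewrite sum_n_C_scal. apply sum_n_C_ext_loc. intros k Hk. now apply newton_term_closed_form.
Qed.
End Transformation.

Theorem mainTheorem12 (q a b t u v x y : C) (r : nat) :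
  (0 < Cmod q)%R -> (Cmod q < 1)%R ->
  a <> 0 -> b <> 0 -> t <> 0 -> u <> 0 -> v <> 0 -> x <> 0 ->
  v / u = / pow_n q r ->
  (forall n : nat, qpoch (y * q / a) q n <> 0) ->
  (forall n : nat, qpoch (q / (a * u * t)) q n <> 0) ->
  (forall n : nat, qpoch (q / (x * b * t)) q n <> 0) ->
  (forall n : nat, qpoch (x * b * t) q n <> 0) ->
  (Cmod (x * b * v * t / u) < 1)%R ->
  phi32 (y / x) (q / (a * b * t)) (q / (a * v * t))
        (y * q / a) (q / (a * u * t)) q (x * b * v * t / u)
  = qpoch_inf (y * b * t) q * qpoch_inf (x * q / a) q
    / (qpoch_inf (x * b * t) q * qpoch_inf (y * q / a) q)
    * phi32 (y / x) (v / u) (q / (a * b * t))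
            (q / (x * b * t)) (q / (a * u * t)) q q.
Proof.
  intros Hq0 Hq1 Ha Hb Ht Hu Hv Hx Hvu HC HD HZ HZ0 Hz.
  assert (Hq : q <> 0) by (intros E; rewrite E, Cmod_0 in Hq0; lra).
  rewrite (pow_n_Cpow q r) in Hvu.
  assert (Ev : v = u / q ^ r).
  { replace v with (v / u * u) by (field; exact Hu). rewrite Hvu. field. now apply Cpow_nz. }
  replace (q / (a * v * t)) with (q / (a * u * t) * q ^ r)
    by (rewrite Ev; field; repeat split; try apply Cpow_nz; assumption).
  replace (x * b * v * t / u) with (x * b * t / q ^ r) in Hz |- *
    by (rewrite Ev; field; repeat split; try apply Cpow_nz; assumption).
  replace (y * q / a) with (y / x * (q / (a * b * t)) * (x * b * t)) in HC |- *
    by (field; repeat split; assumption).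
  replace (y * b * t) with (y / x * (x * b * t)) by (field; exact Hx).
  replace (x * q / a) with (q / (a * b * t) * (x * b * t)) by (field; repeat split; assumption).
  rewrite Hvu. apply phi32_transformation; try assumption.
  repeat apply Cmult_neq_0; assumption.
Qed.
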